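(* For every integer $m \ge 2$, the imbalanced $(m,3)$-RPS game is strongly playable: in every (mixed-strategy) Nash equilibrium of this game, each of the three objects $R$, $P$, $S$ is played with positive probability by at least one player.
   Context: An $(m,n)$-RPS game is a symmetric, zero-sum, win/lose game with $m$ players and $n$ pure strategies (''objects''), played without collusion, in which each player independently chooses an object. The rules assign to every multiset $c$ of $m$ chosen objects a single winning object $\phi(c) \in c$; every player who chose $\phi(c)$ wins and every other player loses. If there are $m'$ winners, each winner receives payoff $\frac{m-m'}{m'}$ and each loser receives payoff $-1$. Players use mixed strategies (independent probability distributions over the objects), and Nash equilibria are taken in mixed strategies. The imbalanced $(m,3)$-RPS has objects $R,P,S$ with the following rules: any multiset containing at least one $S$ and at least one $R$ is won by $R$; any multiset containing only $R$'s and $P$'s (with at least one $P$ and at least one $R$) is won by $P$; any multiset containing only $P$'s and $S$'s (with at least one of each) is won by $S$; a multiset consisting of a single object type is won by that object. A game is strongly playable if in every Nash equilibrium every object is played with positive probability by at least one player. *)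

From HB Require Import structures.
From mathcomp Require Import all_boot all_order all_algebra.
From mathcomp Require Import reals.
Set Implicit Arguments. Unset Strict Implicit. Unset Printing Implicit Defensive.
Import Order.TTheory GRing.Theory Num.Theory.
Local Open Scope ring_scope.

Inductive obj := oR | oP | oS.

Definition obj_to (o : obj) : 'I_3 :=
  match o with oR => inord 0 | oP => inord 1 | oS => inord 2 end.
Definition obj_of (i : 'I_3) : obj :=
  match val i with 0 => oR | 1 => oP | _ => oS end.
Lemma objK : cancel obj_to obj_of.
Proof. by case; rewrite /obj_of /= inordK. Qed.

HB.instance Definition _ := Finite.copy obj (can_type objK).

(* Since the rules only depend on the multiset of chosen objects,
   we represent them as functions of the pure profile that only
   depend on which objects occur. *)
Definition pure_profile (m : nat) := {ffun 'I_m -> obj}.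

Definition occurs m (c : pure_profile m) (o : obj) : bool := [exists j, c j == o].

Definition imbalanced_winner m (c : pure_profile m) : obj :=
  let hR := occurs c oR in let hP := occurs c oP in let hS := occurs c oS in
  if hS && hR then oR
  else if hR && hP then oP
  else if hP && hS then oS
  else
    if hR then oR else if hP then oP else oS.

Definition rps_payoff (R : realType) m (phi : pure_profile m -> obj)
  (c : pure_profile m) (i : 'I_m) : R :=
  let w := phi c in
  let m' := #|[set j | c j == w]| in
  if c i == w then (m%:R - m'%:R) / m'%:R else -1.

Definition mixed_strategy (R : realType) (q : {ffun obj -> R}) : Prop :=
  (forall o, 0 <= q o) /\ \sum_o q o = 1.

Definition mixed_profile (R : realType) m := {ffun 'I_m -> {ffun obj -> R}}.

Definition is_mixed_profile (R : realType) m (p : mixed_profile R m) : Prop :=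
  forall j, mixed_strategy (p j).

Definition expected_payoff (R : realType) m (phi : pure_profile m -> obj)
  (p : mixed_profile R m) (i : 'I_m) : R :=
  \sum_(c : pure_profile m) (\prod_j p j (c j)) * rps_payoff R phi c i.

Definition deviate (R : realType) m (p : mixed_profile R m) (i : 'I_m)
  (q : {ffun obj -> R}) : mixed_profile R m :=
  [ffun j => if j == i then q else p j].

Definition nash_equilibrium (R : realType) m (phi : pure_profile m -> obj)
  (p : mixed_profile R m) : Prop :=
  is_mixed_profile p /\
  forall i (q : {ffun obj -> R}), mixed_strategy q ->
    expected_payoff phi (deviate p i q) i <= expected_payoff phi p i.

Definition strongly_playable (R : realType) m (phi : pure_profile m -> obj) : Prop :=
  forall p : mixed_profile R m, nash_equilibrium phi p ->
    forall o : obj, exists j : 'I_m, 0 < p j o.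

(* Call [prey x] the object that [x] beats when only these two are chosen.
   Suppose nobody plays some object o.  Then, whatever the others do, a player
   choosing prey (prey o) does strictly better by choosing prey o instead, so in
   equilibrium everybody plays prey o surely.  Against such a unanimous crowd a
   lone player choosing o wins outright instead of tying, which again contradicts
   the equilibrium condition. *)
From mathcomp Require Import all_boot all_order all_algebra perm.
From mathcomp Require Import reals.
Set Implicit Arguments. Unset Strict Implicit. Unset Printing Implicit Defensive.
Import Order.TTheory GRing.Theory Num.Theory.
Local Open Scope ring_scope.

Section MixedExtension.
Variables (R : realType) (m : nat) (phi : pure_profile m -> obj).
Implicit Types (p : mixed_profile R m) (c : pure_profile m) (q : {ffun obj -> R}).

Definition others_weight p (i : 'I_m) c : R := \prod_(j | j != i) p j (c j).

Definition pure_payoff p (i : 'I_m) (x : obj) : R :=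
  \sum_(c : pure_profile m | c i == x) others_weight p i c * rps_payoff R phi c i.

Lemma expected_payoff_deviate p i q :
  expected_payoff phi (deviate p i q) i = \sum_x q x * pure_payoff p i x.
Proof.
transitivity (\sum_(c : pure_profile m)
                q (c i) * (others_weight p i c * rps_payoff R phi c i)).
  apply: eq_bigr => c _; rewrite (bigD1 i) //= ffunE eqxx mulrA; congr (_ * _ * _).
  by apply: eq_bigr => j; rewrite ffunE => /negbTE ->.
rewrite (partition_big (fun c => c i) predT) //=; apply: eq_bigr => x _.
by rewrite mulr_sumr; apply: eq_bigr => c /eqP ->.
Qed.

Lemma deviate_id p i : deviate p i (p i) = p.
Proof. by apply/ffunP => j; rewrite ffunE; case: eqP => // ->. Qed.

Definition pure_strategy (x : obj) : {ffun obj -> R} := [ffun z => (z == x)%:R].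

Lemma sum_pure_strategy x (F : obj -> R) : \sum_z pure_strategy x z * F z = F x.
Proof.
rewrite (bigD1 x) //= ffunE eqxx mul1r big1 ?addr0 // => z.
by rewrite ffunE => /negbTE ->; rewrite mul0r.
Qed.

Lemma mixed_pure_strategy x : mixed_strategy (pure_strategy x).
Proof.
split=> [z|]; first by rewrite ffunE ler0n.
by rewrite -[RHS](sum_pure_strategy x (fun=> 1)); apply: eq_bigr => z _; rewrite mulr1.
Qed.

Lemma nash_support_best_response p i x y :
  nash_equilibrium phi p -> 0 < p i y -> pure_payoff p i x <= pure_payoff p i y.
Proof.
move=> [p_mixed p_nash] p_iy.
set E := expected_payoff phi p i.
have E_def : E = \sum_z p i z * pure_payoff p i z.
  by rewrite /E -{1}(deviate_id p i) expected_payoff_deviate.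
have pure_le_E z : pure_payoff p i z <= E.
  have := p_nash i _ (mixed_pure_strategy z).
  by rewrite expected_payoff_deviate sum_pure_strategy.
have [p_ge0 p_sum1] := p_mixed i.
have gap_sum0 : \sum_z p i z * (E - pure_payoff p i z) = 0.
  under eq_bigr do rewrite mulrBr.
  by rewrite sumrB -mulr_suml p_sum1 mul1r E_def subrr.
have gap_ge0 z : 0 <= p i z * (E - pure_payoff p i z).
  by rewrite mulr_ge0 ?subr_ge0.
have /eqP := psumr_eq0P (fun z _ => gap_ge0 z) gap_sum0 (i := y) isT.
rewrite mulf_eq0 subr_eq0 gt_eqF //= => /eqP <-; exact: pure_le_E.
Qed.

Lemma mixed_strategy_support q : mixed_strategy q -> exists x, 0 < q x.
Proof.
move=> [q_ge0 q_sum1].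
have /hasP[x _ /= q_x_gt0] : has (fun x => true && (0 < q x)) (index_enum obj).
  by rewrite -psumr_neq0 // q_sum1 oner_neq0.
by exists x.
Qed.

Lemma others_weight_ge0 p i c : is_mixed_profile p -> 0 <= others_weight p i c.
Proof. by move=> p_mixed; apply: prodr_ge0 => j _; exact: (p_mixed j).1. Qed.

Lemma others_weight_neq0 p i c : is_mixed_profile p ->
  others_weight p i c != 0 -> forall j, j != i -> 0 < p j (c j).
Proof.
move=> p_mixed w_neq0 j j_neq_i; rewrite lt0r (p_mixed j).1 andbT.
by apply: contra w_neq0 => p_j_eq0; apply/prodf_eq0; exists j.
Qed.

Definition switch_choice (i : 'I_m) (x y : obj) c : pure_profile m :=
  [ffun j => if j == i then tperm x y (c j) else c j].

Lemma switch_choiceK i x y : involutive (switch_choice i x y).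
Proof.
by move=> c; apply/ffunP => j; rewrite !ffunE; case: eqP; rewrite ?tpermK.
Qed.

Lemma switch_choice_at i x y c : (switch_choice i x y c i == y) = (c i == x).
Proof.
rewrite ffunE eqxx; apply/eqP/eqP => [|->]; last exact: tpermL.
by move/(canRL (tpermK x y)); rewrite tpermR.
Qed.

Lemma others_weight_switch p i x y c :
  others_weight p i (switch_choice i x y c) = others_weight p i c.
Proof. by apply: eq_bigr => j /negbTE j_neq_i; rewrite ffunE j_neq_i. Qed.

Lemma pure_payoff_subE p i x y :
  pure_payoff p i x - pure_payoff p i y =
  \sum_(c : pure_profile m | c i == x) others_weight p i c *
     (rps_payoff R phi c i - rps_payoff R phi (switch_choice i x y c) i).
Proof.
rewrite /pure_payoff [X in _ - X](reindex_inj (inv_inj (switch_choiceK i x y))).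
rewrite (eq_bigl _ _ (switch_choice_at i x y)) -sumrB.
by apply: eq_bigr => c _; rewrite others_weight_switch mulrBr.
Qed.

Lemma pure_payoff_lt p i x y : is_mixed_profile p ->
  (forall c c' : pure_profile m, c i = x -> c' i = y ->
     (forall j, j != i -> c' j = c j /\ 0 < p j (c j)) ->
     rps_payoff R phi c' i < rps_payoff R phi c i) ->
  pure_payoff p i y < pure_payoff p i x.
Proof.
move=> p_mixed switch_lt; rewrite -subr_gt0 pure_payoff_subE.
pose c' c := switch_choice i x y c.
have switch_gain c : c i = x -> (forall j, j != i -> 0 < p j (c j)) ->
    0 < rps_payoff R phi c i - rps_payoff R phi (c' c) i.
  move=> c_i c_supp; rewrite subr_gt0 switch_lt //.
    by apply/eqP; rewrite switch_choice_at c_i.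
  by move=> j j_neq_i; rewrite ffunE (negbTE j_neq_i); split=> //; exact: c_supp.
have term_ge0 c : c i == x ->
    0 <= others_weight p i c * (rps_payoff R phi c i - rps_payoff R phi (c' c) i).
  move=> /eqP c_i; have [->|w_neq0] := eqVneq (others_weight p i c) 0.
    by rewrite mul0r.
  rewrite mulr_ge0 ?others_weight_ge0 ?ltW //.
  exact/switch_gain/others_weight_neq0.
have [f f_supp] := fin_all_exists (fun j => mixed_strategy_support (p_mixed j)).
pose c0 : pure_profile m := [ffun j => if j == i then x else f j].
have c0_i : c0 i = x by rewrite ffunE eqxx.
have c0_supp j : j != i -> 0 < p j (c0 j) by rewrite ffunE => /negbTE ->.
rewrite lt0r sumr_ge0 // andbT psumr_neq0 //; apply/hasP; exists c0.
  exact: mem_index_enum.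
rewrite c0_i eqxx /= mulr_gt0 ?switch_gain //.
by apply: prodr_gt0 => j; exact: c0_supp.
Qed.

Lemma rps_payoff_lose c i : c i != phi c -> rps_payoff R phi c i = -1.
Proof. by rewrite /rps_payoff => /negbTE ->. Qed.

Lemma rps_payoff_win_ge0 c i : c i = phi c -> 0 <= rps_payoff R phi c i.
Proof.
rewrite /rps_payoff => ->; rewrite eqxx divr_ge0 // subr_ge0 ler_nat.
by rewrite -[X in (_ <= X)%N]card_ord max_card.
Qed.

Lemma rps_payoff_win_gt0 c i j :
  c i = phi c -> c j != phi c -> 0 < rps_payoff R phi c i.
Proof.
move=> c_i c_j; rewrite /rps_payoff c_i eqxx.
set winners := [set k | c k == phi c].
have winners_gt0 : (0 < #|winners|)%N by apply/card_gt0P; exists i; rewrite inE c_i.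
have winners_ltm : (#|winners| < m)%N.
  rewrite -[X in (_ < X)%N]card_ord -cardsT proper_card // properT.
  by apply: contraNneq c_j => winnersT; have := in_setT j; rewrite -winnersT inE.
by rewrite divr_gt0 ?ltr0n // subr_gt0 ltr_nat.
Qed.

Lemma rps_payoff_unanimous c i : (forall j, c j = phi c) -> rps_payoff R phi c i = 0.
Proof.
move=> c_const; rewrite /rps_payoff c_const eqxx.
have -> : [set j | c j == phi c] = setT by apply/setP => j; rewrite !inE c_const eqxx.
by rewrite cardsT card_ord subrr mul0r.
Qed.
End MixedExtension.

Definition prey (x : obj) : obj := match x with oR => oS | oP => oR | oS => oP end.

Lemma prey3 x : prey (prey (prey x)) = x.
Proof. by case: x. Qed.

Lemma prey_neq x : prey x != x.
Proof. by apply/eqP; case: x. Qed.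

Lemma prey2_neq x : prey (prey x) != x.
Proof. by apply/eqP; case: x. Qed.

Lemma obj_prey_cases o x : [\/ x = o, x = prey o | x = prey (prey o)].
Proof. by case: o; case: x; first [exact: Or31 | exact: Or32 | exact: Or33]. Qed.

Lemma imbalanced_winner_prey m (c : pure_profile m) x :
  ~~ occurs c x -> occurs c (prey x) -> imbalanced_winner c = prey x.
Proof.
rewrite /imbalanced_winner.
by case: x; case: (occurs c oR); case: (occurs c oP); case: (occurs c oS).
Qed.

Lemma imbalanced_winner_const m (c : pure_profile m) x (i : 'I_m) :
  (forall j, c j = x) -> imbalanced_winner c = x.
Proof.
move=> c_const; rewrite -[RHS]prey3; apply: imbalanced_winner_prey.
  by apply/existsP => -[j]; rewrite c_const eq_sym (negbTE (prey2_neq _)).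
by apply/existsP; exists i; rewrite prey3 c_const.
Qed.

Lemma exists_other (m : nat) (i : 'I_m) : (2 <= m)%N -> exists j : 'I_m, j != i.
Proof.
move=> m_ge2; pose j0 : 'I_m := Ordinal (ltnW m_ge2); pose j1 : 'I_m := Ordinal m_ge2.
by case: (eqVneq i j0) => [->|]; [exists j1 | exists j0; rewrite eq_sym].
Qed.

Section ImbalancedGame.
Variables (R : realType) (m : nat).
Hypothesis m_ge2 : (2 <= m)%N.
Local Notation phi := (@imbalanced_winner m).
Local Notation payoff c i := (rps_payoff R phi c i).

Lemma imbalanced_payoff_prey_lt o (c c' : pure_profile m) i :
  c i = prey o -> c' i = prey (prey o) ->
  (forall j, j != i -> c' j = c j /\ c j != o) ->
  payoff c' i < payoff c i.
Proof.
move=> c_i c'_i others.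
have c_no_o : ~~ occurs c o.
  apply/existsP => -[j /eqP]; have [->|j_neq_i] := eqVneq j i.
    by rewrite c_i; apply/eqP; exact: prey_neq.
  by apply/eqP; exact: (others j j_neq_i).2.
have phi_c : phi c = prey o.
  by apply: imbalanced_winner_prey c_no_o _; apply/existsP; exists i; rewrite c_i.
case: (boolP [exists j, (j != i) && (c j == prey o)]).
  move=> /existsP[j /andP[j_neq_i /eqP c_j]].
  have phi_c' : phi c' = prey o.
    apply: imbalanced_winner_prey.
      apply/existsP => -[k /eqP]; have [->|k_neq_i] := eqVneq k i.
        by rewrite c'_i; apply/eqP; exact: prey2_neq.
      by rewrite (others k k_neq_i).1; apply/eqP; exact: (others k k_neq_i).2.
    by apply/existsP; exists j; rewrite (others j j_neq_i).1 c_j.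
  rewrite rps_payoff_lose; last by rewrite phi_c' c'_i prey_neq.
  by rewrite (lt_le_trans _ (rps_payoff_win_ge0 _ _)) ?ltrN10 // phi_c.
rewrite negb_exists => /forallP no_prey.
have others_prey2 j : j != i -> c j = prey (prey o).
  move=> j_neq_i; have := no_prey j; rewrite j_neq_i /=.
  case: (obj_prey_cases o (c j)) => // c_j; last by rewrite c_j eqxx.
  by have := (others j j_neq_i).2; rewrite c_j eqxx.
have c'_const j : c' j = prey (prey o).
  by have [->|j_neq_i] := eqVneq j i; rewrite ?c'_i ?(others j j_neq_i).1 ?others_prey2.
have phi_c' : phi c' = prey (prey o) := imbalanced_winner_const i c'_const.
have [j j_neq_i] := exists_other i m_ge2.
rewrite rps_payoff_unanimous => [|k]; last by rewrite phi_c' c'_const.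
apply: (@rps_payoff_win_gt0 R _ _ _ _ j); first by rewrite phi_c.
by rewrite phi_c others_prey2 // prey_neq.
Qed.

Lemma imbalanced_payoff_lone_predator o (c c' : pure_profile m) i :
  c i = o -> c' i = prey o ->
  (forall j, j != i -> c' j = c j /\ c j = prey o) ->
  payoff c' i < payoff c i.
Proof.
move=> c_i c'_i others.
have c_prey2 : ~~ occurs c (prey (prey o)).
  apply/existsP => -[j /eqP]; have [->|j_neq_i] := eqVneq j i.
    by rewrite c_i; apply/eqP; rewrite eq_sym prey2_neq.
  by rewrite (others j j_neq_i).2; apply/eqP; rewrite eq_sym prey_neq.
have phi_c : phi c = o.
  rewrite -[RHS]prey3 (imbalanced_winner_prey c_prey2) // prey3.
  by apply/existsP; exists i; rewrite c_i.
have c'_const j : c' j = prey o.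
  have [->|j_neq_i] := eqVneq j i; first exact: c'_i.
  by have [-> ->] := others j j_neq_i.
have phi_c' : phi c' = prey o := imbalanced_winner_const i c'_const.
have [j j_neq_i] := exists_other i m_ge2.
rewrite rps_payoff_unanimous => [|k]; last by rewrite phi_c' c'_const.
apply: (@rps_payoff_win_gt0 R _ _ _ _ j); first by rewrite phi_c.
by rewrite phi_c (others j j_neq_i).2 prey_neq.
Qed.

Lemma nash_imbalanced_prey2_unplayed (p : mixed_profile R m) o :
  nash_equilibrium phi p -> (forall j, ~~ (0 < p j o)) ->
  forall i, ~~ (0 < p i (prey (prey o))).
Proof.
move=> p_nash o_unplayed i; apply/negP => p_i_gt0; have [p_mixed _] := p_nash.
have := nash_support_best_response (prey o) p_nash p_i_gt0.
apply/negP; rewrite -ltNge; apply: pure_payoff_lt => // c c' c_i c'_i others.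
apply: (imbalanced_payoff_prey_lt c_i c'_i) => j j_neq_i.
have [c'_j c_j_gt0] := others j j_neq_i; split=> //.
by apply: contraTneq c_j_gt0 => ->; exact: o_unplayed.
Qed.

Lemma nash_imbalanced_unplayed_false (p : mixed_profile R m) o :
  nash_equilibrium phi p -> (forall j, ~~ (0 < p j o)) -> False.
Proof.
move=> p_nash o_unplayed; have [p_mixed _] := p_nash.
have prey2_unplayed := nash_imbalanced_prey2_unplayed p_nash o_unplayed.
have only_prey j y : 0 < p j y -> y = prey o.
  case: (obj_prey_cases o y) => // ->; first by rewrite (negbTE (o_unplayed j)).
  by rewrite (negbTE (prey2_unplayed j)).
pose i : 'I_m := Ordinal (ltnW m_ge2).
have [y p_i_gt0] := mixed_strategy_support (p_mixed i).
have := nash_support_best_response o p_nash p_i_gt0.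
apply/negP; rewrite -ltNge (only_prey i y p_i_gt0).
apply: pure_payoff_lt => // c c' c_i c'_i others.
apply: (imbalanced_payoff_lone_predator c_i c'_i) => j j_neq_i.
by have [c'_j /only_prey c_j] := others j j_neq_i.
Qed.

End ImbalancedGame.

Theorem mainTheorem1 (R : realType) (m : nat) (hm : (2 <= m)%N) :
  strongly_playable R (@imbalanced_winner m).
Proof.
move=> p p_nash o; apply/existsP; apply: contraT => /existsPn o_unplayed.
case: (nash_imbalanced_unplayed_false hm p_nash o_unplayed).
Qed.
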